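(* Let $\lambda$ be a partition of $n$ with conjugate partition $\lambda'$, let $k\ge0$, and let $X\subseteq[n+k]$. Then $$\#\{S\in\mathrm{SYT}^{+k}(\lambda):\mathrm{Des}^{+k}(S)=X\}=\#\{S\in\mathrm{SYT}^{+k}(\lambda'):\mathrm{Des}^{+k}(S)=X\}.$$
   Context: $\mathrm{SYT}^{+k}(\lambda)$: fillings $S$ of the cells of the Ferrers diagram of $\lambda$ (rows numbered from the top) by nonempty sets of positive integers forming a set partition of $[n+k]$, with $\max S(u)<\min S(v)$ whenever $u\ne v$ and $u$ is weakly north and weakly west of $v$. For such $S$, $\mathrm{Des}^{+k}(S)$ is the set of all $x\in[n+k]$ that are not the minimum of the cell-set containing them, together with all $j$ such that $j$ is the minimum of the set in some cell $c$, $j+1$ is the minimum of the set in some cell $c'$, and $c'$ lies in a strictly higher row than $c$. *)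

From mathcomp Require Import all_boot.
Set Implicit Arguments. Unset Strict Implicit. Unset Printing Implicit Defensive.

Definition is_partition (la : seq nat) (n : nat) : bool :=
  [&& sorted geq la, all (fun p => 0 < p) la & sumn la == n].

Definition conj_part (la : seq nat) : seq nat :=
  mkseq (fun j => count (fun p => j < p) la) (head 0 la).

(* Cell (i, j) = row i (counted from the top, starting at 0), column j.
   For a partition of n every cell has i < n and j < n. *)
Definition cellp (n : nat) (la : seq nat) (u : 'I_n * 'I_n) : bool :=
  (u.2 : nat) < nth 0 la u.1.

(* A set-valued filling: S u is the set of entries in cell u.  The integer
   x in [n+k] = {1,..,n+k} is encoded by the ordinal x-1 : 'I_(n+k). *)
Definition filling (n k : nat) := {ffun 'I_n * 'I_n -> {set 'I_(n + k)}}.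

Definition sytk (n k : nat) (la : seq nat) (S : filling n k) : bool :=
  [&& [forall u, ~~ cellp la u ==> (S u == set0)],
      [forall u, cellp la u ==> (S u != set0)],
      [forall u, forall v, (u != v) ==> [disjoint S u & S v]],
      [forall x : 'I_(n + k), exists u, x \in S u]
    & [forall u, forall v,
        [&& cellp la u, cellp la v, u != v, u.1 <= v.1 & u.2 <= v.2] ==>
        [forall x in S u, forall y in S v, x < y]]].

Definition is_min (n k : nat) (S : filling n k) (u : 'I_n * 'I_n) (x : 'I_(n + k)) :=
  (x \in S u) && [forall y in S u, x <= y].

Definition desk (n k : nat) (S : filling n k) : {set 'I_(n + k)} :=
  [set x : 'I_(n + k) |
     [exists u, (x \in S u) && ~~ is_min S u x]
  || [exists c, exists c', exists y : 'I_(n + k),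
        [&& (y : nat) == x.+1, is_min S c x, is_min S c' y & (c'.1 < c.1)]]].

(* Replace "c' lies in a strictly higher row than c" in the definition of Des^{+k} by
   [w c' < w c] for a weight [w] on the cells.  The row index gives Des^{+k} itself, and by
   transposition the column index gives Des^{+k} of fillings of the conjugate shape.  Since
   consecutive minima never sit in comparable cells in the wrong order, the row (column)
   index may be replaced by the row (column) reading order, and both are linear extensions
   of the cell poset.  The number of fillings with a given w-descent set is the same for
   all linear extensions w: two of them are joined by a chain of transpositions of
   incomparable cells a, b adjacent in w, and for such a transposition, exchanging the
   entries x and x+1 whenever they are the minima of a and b is a bijection between the
   two classes. *)

From mathcomp Require Import all_boot perm zify.
Set Implicit Arguments. Unset Strict Implicit. Unset Printing Implicit Defensive.

Definition cell_le n (u v : 'I_n * 'I_n) := (u.1 <= v.1) && (u.2 <= v.2).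

Definition deskw n k (w : 'I_n * 'I_n -> nat) (S : filling n k) : {set 'I_(n + k)} :=
  [set x : 'I_(n + k) |
     [exists u, (x \in S u) && ~~ is_min S u x]
  || [exists c, exists c', exists y : 'I_(n + k),
        [&& (y : nat) == x.+1, is_min S c x, is_min S c' y & w c' < w c]]].

Lemma is_min_mem n k (S : filling n k) u x : is_min S u x -> x \in S u.
Proof. by case/andP. Qed.

Lemma is_min_uniq n k (S : filling n k) u p q : is_min S u p -> is_min S u q -> p = q.
Proof.
case/andP=> Sp /forall_inP minp /andP[Sq /forall_inP minq].
by apply/val_inj/eqP; rewrite eqn_leq minp // minq.
Qed.

Section SytkTheory.
Variables (n k : nat) (la : seq nat) (S : filling n k).
Hypothesis HS : sytk la S.

Lemma sytk_set0 u : ~~ cellp la u -> S u = set0.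
Proof. by case/and5P: HS => /forallP out _ _ _ _ /(implyP (out u))/eqP. Qed.

Lemma sytk_cell u z : z \in S u -> cellp la u.
Proof. by apply: contraTT => /sytk_set0 ->; rewrite inE. Qed.

Lemma sytk_set0Pn u : cellp la u -> exists z, z \in S u.
Proof. by case/and5P: HS => _ /forallP ne _ _ _ /(implyP (ne u))/set0Pn. Qed.

Lemma sytk_mem_inj u v z : z \in S u -> z \in S v -> u = v.
Proof.
case/and5P: HS => _ _ /forallP disj _ _ Su Sv; apply/eqP; apply: contraTT isT => uv.
by have /disjointFr/(_ Su) := implyP (forallP (disj u) v) uv; rewrite Sv.
Qed.

Lemma sytk_cover z : exists u, z \in S u.
Proof. by case/and5P: HS => _ _ _ /forallP/(_ z)/existsP. Qed.

Lemma sytk_lt u v p q : u != v -> cell_le u v -> p \in S u -> q \in S v -> p < q.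
Proof.
case/and5P: HS => _ _ _ _ /forallP ord uv /andP[le1 le2] Sp Sq.
have := implyP (forallP (ord u) v).
rewrite (sytk_cell Sp) (sytk_cell Sq) uv le1 le2 => /(_ isT) /forall_inP /(_ p Sp).
by move/forall_inP; apply.
Qed.

Lemma sytk_consecutive_minima c c' (x y : 'I_(n + k)) :
  (y : nat) = x.+1 -> is_min S c x -> is_min S c' y ->
  [/\ cellp la c, cellp la c', c != c' & ~~ cell_le c' c].
Proof.
move=> Exy mx my; have Sx := is_min_mem mx; have Sy := is_min_mem my.
have cc' : c != c'.
  by apply/eqP => Ec; move: Exy; rewrite Ec in mx; rewrite (is_min_uniq mx my); lia.
split; rewrite ?(sytk_cell Sx) ?(sytk_cell Sy) //.
apply/negP => le; have := sytk_lt _ le Sy Sx; rewrite eq_sym cc' Exy => /(_ isT); lia.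
Qed.

End SytkTheory.

Lemma deskw_ext n k (S : filling n k) w1 w2 :
  (forall c c' (x y : 'I_(n + k)), (y : nat) = x.+1 -> is_min S c x -> is_min S c' y ->
     (w1 c' < w1 c) = (w2 c' < w2 c)) -> deskw w1 S = deskw w2 S.
Proof.
move=> Ew; apply/setP => x; rewrite !inE; congr orb.
apply: eq_existsb => c; apply: eq_existsb => c'; apply: eq_existsb => y.
by apply/and4P/and4P => -[/eqP Exy mx my]; rewrite (Ew c c' x y) // Exy.
Qed.

Lemma deskw_ext_sytk n k la (S : filling n k) w1 w2 : sytk la S ->
  (forall c c', cellp la c -> cellp la c' -> c != c' -> ~~ cell_le c' c ->
     (w1 c' < w1 c) = (w2 c' < w2 c)) -> deskw w1 S = deskw w2 S.
Proof.
move=> HS Ew; apply: deskw_ext => c c' x y Exy mx my.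
by have [] := sytk_consecutive_minima HS Exy mx my; apply: Ew.
Qed.

Lemma tperm_succ_leq N (x y p q : 'I_N) : (y : nat) = x.+1 ->
  ~~ ((p == x) && (q == y)) -> ~~ ((p == y) && (q == x)) ->
  (tperm x y p <= tperm x y q) = (p <= q).
Proof.
rewrite -!(inj_eq val_inj) /= => Exy.
case: tpermP => [->|->|/eqP + /eqP +]; case: tpermP => [->|->|/eqP + /eqP +];
  rewrite -?(inj_eq val_inj) /=; lia.
Qed.

Definition swap_entries n k (x y : 'I_(n + k)) (S : filling n k) : filling n k :=
  [ffun u => tperm x y @^-1: S u].

Lemma swap_entriesK n k (x y : 'I_(n + k)) : involutive (swap_entries x y).
Proof. by move=> S; apply/ffunP => u; apply/setP => z; rewrite !ffunE !inE tpermK. Qed.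

Section SwapMinima.
Variables (n k : nat) (la : seq nat) (S : filling n k) (a b : 'I_n * 'I_n) (x y : 'I_(n + k)).
Hypotheses (HS : sytk la S) (Exy : (y : nat) = x.+1) (nab : ~~ cell_le a b).
Hypotheses (min_ax : is_min S a x) (min_by : is_min S b y).
Local Notation t := (tperm x y).
Local Notation S' := (swap_entries x y S).

Lemma in_swap_entries z u : (z \in S' u) = (t z \in S u).
Proof. by rewrite ffunE inE. Qed.

Lemma swap_cells_neq : a != b.
Proof. by apply: contraNneq nab => ->; rewrite /cell_le !leqnn. Qed.

Lemma swap_not_same_cell c p q : t p \in S c -> t q \in S c -> ~~ ((p == x) && (q == y)).
Proof.
move=> Sp Sq; apply/negP => /andP[/eqP Ep /eqP Eq]; move: Sp Sq; rewrite Ep Eq tpermL tpermR.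
move=> /(sytk_mem_inj HS (is_min_mem min_by)) <- /(sytk_mem_inj HS (is_min_mem min_ax)) Eca.
by move: swap_cells_neq; rewrite Eca eqxx.
Qed.

Lemma is_min_swap_entries c z : is_min S' c z = is_min S c (t z).
Proof.
rewrite /is_min in_swap_entries; apply: andb_id2l => Sz.
apply/forall_inP/forall_inP => [minz q Sq | minz q Sq].
- have := minz (t q); rewrite in_swap_entries tpermK => /(_ Sq).
  rewrite -{2}[q](tpermK x y) (tperm_succ_leq Exy) //.
  + by apply: swap_not_same_cell Sz _; rewrite tpermK.
  + by rewrite andbC; apply: swap_not_same_cell Sz; rewrite tpermK.
- rewrite in_swap_entries in Sq; rewrite -(tperm_succ_leq Exy) ?minz //.
  + exact: swap_not_same_cell Sz Sq.
  + by rewrite andbC; apply: swap_not_same_cell Sq Sz.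
Qed.

Lemma is_min_tperm c v : is_min S c v -> is_min S (tperm a b c) (t v).
Proof.
move=> mv; have Sv := is_min_mem mv.
case: tpermP => [Ec|Ec|ca cb].
- by rewrite Ec in mv; rewrite (is_min_uniq mv min_ax) tpermL.
- by rewrite Ec in mv; rewrite (is_min_uniq mv min_by) tpermR.
rewrite tpermD //; apply/eqP => Ev; rewrite -Ev in Sv.
- by apply: ca; exact: (sytk_mem_inj HS Sv (is_min_mem min_ax)).
- by apply: cb; exact: (sytk_mem_inj HS Sv (is_min_mem min_by)).
Qed.

Lemma is_min_swap c z : is_min S' c z = is_min S (tperm a b c) z.
Proof.
rewrite is_min_swap_entries; apply/idP/idP => [/is_min_tperm | /is_min_tperm].
- by rewrite tpermK.
- by rewrite !tpermK.
Qed.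

Lemma sytk_swap_entries : sytk la S'.
Proof.
apply/and5P; split.
- apply/forallP => u; apply/implyP => /(sytk_set0 HS) Su.
  by apply/eqP/setP => z; rewrite in_swap_entries Su !inE.
- apply/forallP => u; apply/implyP => /(sytk_set0Pn HS) [z Sz].
  by apply/set0Pn; exists (t z); rewrite in_swap_entries tpermK.
- apply/forallP => u; apply/forallP => v; apply/implyP => uv.
  rewrite -setI_eq0; apply/eqP/setP => z; rewrite !inE !in_swap_entries.
  by apply: contraNF uv => /andP[Su Sv]; rewrite (sytk_mem_inj HS Su Sv).
- apply/forallP => z; have [u Su] := sytk_cover HS (t z).
  by apply/existsP; exists u; rewrite in_swap_entries.
apply/forallP => u; apply/forallP => v; apply/implyP => /and5P[_ _ uv le1 le2].
have le : cell_le u v by rewrite /cell_le le1 le2.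
apply/forall_inP => p; rewrite in_swap_entries => Sp.
apply/forall_inP => q; rewrite in_swap_entries => Sq.
case: (boolP ((p == x) && (q == y))) => [/andP[/eqP-> /eqP->]|pxy]; first by rewrite Exy.
case: (boolP ((p == y) && (q == x))) => [/andP[/eqP Ep /eqP Eq]|pyx].
  move: Sp Sq; rewrite Ep Eq tpermL tpermR.
  move=> /(sytk_mem_inj HS (is_min_mem min_ax)) Eu /(sytk_mem_inj HS (is_min_mem min_by)) Ev.
  by move: nab; rewrite Eu Ev le.
by have := sytk_lt HS uv le Sp Sq; rewrite !ltnNge (tperm_succ_leq Exy) // andbC.
Qed.

Lemma nonmin_is_min c v : is_min S c v ->
  [exists u, (v \in S u) && ~~ is_min S u v] = false.
Proof.
move=> mv; apply/existsP => -[u /andP[Sv]]; apply/negP/negPn.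
by rewrite -(sytk_mem_inj HS (is_min_mem mv) Sv).
Qed.

Lemma nonmin_tperm z : [exists u, (t z \in S u) && ~~ is_min S u (t z)] =
  [exists u, (z \in S u) && ~~ is_min S u z].
Proof.
case: tpermP => [->|->|//].
- by rewrite (nonmin_is_min min_ax) (nonmin_is_min min_by).
- by rewrite (nonmin_is_min min_ax) (nonmin_is_min min_by).
Qed.

Lemma deskw_swap_entries w : deskw (w \o tperm a b) S' = deskw w S.
Proof.
apply/setP => z; rewrite !inE; congr orb.
  rewrite -nonmin_tperm; apply: eq_existsb => u.
  by rewrite in_swap_entries is_min_swap_entries.
apply/existsP/existsP => -[c /existsP[c' /existsP[y' H]]];
  exists (tperm a b c); apply/existsP; exists (tperm a b c'); apply/existsP; exists y'.
- by move: H; rewrite !is_min_swap.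
- by rewrite !is_min_swap /= !tpermK.
Qed.

End SwapMinima.

Section CellSwap.
Variables (n k : nat) (la : seq nat) (a b : 'I_n * 'I_n).
Hypotheses (nab : ~~ cell_le a b) (nba : ~~ cell_le b a).

Definition consecutive_minima (S : filling n k) (p : 'I_(n + k) * 'I_(n + k)) :=
  ((p.2 : nat) == p.1.+1) &&
  ((is_min S a p.1 && is_min S b p.2) || (is_min S b p.1 && is_min S a p.2)).

Lemma consecutive_minima_uniq S p q :
  consecutive_minima S p -> consecutive_minima S q -> p = q.
Proof.
case: p q => [x y] [x' y'] /andP[/= /eqP Ey mp] /andP[/= /eqP Ey' mq].
case/orP: mp => /andP[mx my]; case/orP: mq => /andP[mx' my'].
- by rewrite (is_min_uniq mx mx') (is_min_uniq my my').
- by move: Ey Ey'; rewrite (is_min_uniq mx my') (is_min_uniq my mx'); lia.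
- by move: Ey Ey'; rewrite (is_min_uniq mx my') (is_min_uniq my mx'); lia.
- by rewrite (is_min_uniq mx mx') (is_min_uniq my my').
Qed.

Lemma swap_consecutive_minima S p : sytk la S -> consecutive_minima S p ->
  [/\ sytk la (swap_entries p.1 p.2 S), consecutive_minima (swap_entries p.1 p.2 S) p
    & forall w, deskw (w \o tperm a b) (swap_entries p.1 p.2 S) = deskw w S].
Proof.
case: p => x y HS /andP[/= /eqP Exy]; case/orP => /andP[mx my].
- split=> [||w]; first exact: sytk_swap_entries HS Exy nab mx my.
    rewrite /consecutive_minima /= Exy eqxx !(is_min_swap HS Exy nab mx my).
    by rewrite tpermL tpermR mx my orbT.
  exact: (deskw_swap_entries HS Exy nab mx my).
- rewrite tpermC; split=> [||w]; first exact: sytk_swap_entries HS Exy nba mx my.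
    rewrite /consecutive_minima /= Exy eqxx !(is_min_swap HS Exy nba mx my).
    by rewrite tpermL tpermR mx my.
  exact: (deskw_swap_entries HS Exy nba mx my).
Qed.

Definition cell_swap (S : filling n k) : filling n k :=
  if [pick p | consecutive_minima S p] is Some p then swap_entries p.1 p.2 S else S.

Variant cell_swap_spec S : filling n k -> Type :=
  | CellSwapSome p of consecutive_minima S p : cell_swap_spec S (swap_entries p.1 p.2 S)
  | CellSwapNone of (forall p, ~~ consecutive_minima S p) : cell_swap_spec S S.

Lemma cell_swapP S : cell_swap_spec S (cell_swap S).
Proof.
rewrite /cell_swap; case: pickP => [p cp|none]; first exact: CellSwapSome.
by apply: CellSwapNone => p; rewrite none.
Qed.

Lemma sytk_cell_swap S : sytk la S -> sytk la (cell_swap S).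
Proof. by move=> HS; case: cell_swapP => // p /(swap_consecutive_minima HS) []. Qed.

Lemma cell_swapK S : sytk la S -> cell_swap (cell_swap S) = S.
Proof.
move=> HS; case: (cell_swapP S) => [p cp|none]; last first.
  by case: cell_swapP => // p; rewrite (negbTE (none p)).
have [_ cp' _] := swap_consecutive_minima HS cp.
case: cell_swapP => [q cq|none]; last by rewrite (negbTE (none p)) in cp'.
by rewrite -(consecutive_minima_uniq cp' cq) swap_entriesK.
Qed.

Definition adjacent (w : 'I_n * 'I_n -> nat) := forall d, cellp la d -> d != a -> d != b ->
  (w d < w a) = (w d < w b) /\ (w a < w d) = (w b < w d).

Lemma adjacent_tperm w : adjacent w -> adjacent (w \o tperm a b).
Proof.
move=> adj d Cd da db /=; rewrite tpermL tpermR tpermD 1?eq_sym //.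
by have [-> ->] := adj d Cd da db.
Qed.

Lemma adjacent_tperm_ltn w u v : adjacent w -> cellp la u -> cellp la v ->
  (u, v) != (a, b) -> (u, v) != (b, a) ->
  (w (tperm a b u) < w (tperm a b v)) = (w u < w v).
Proof.
move=> adj; case: (tpermP a b u) => [->|->|/eqP ua /eqP ub];
  case: (tpermP a b v) => [->|->|/eqP va /eqP vb] => Cu Cv nab' nba'; rewrite ?ltnn //.
- by rewrite eqxx in nab'.
- by have [_ ->] := adj _ Cv va vb.
- by rewrite eqxx in nba'.
- by have [_ ->] := adj _ Cv va vb.
- by have [-> _] := adj _ Cu ua ub.
- by have [-> _] := adj _ Cu ua ub.
Qed.

Lemma deskw_cell_swap w S : adjacent w -> sytk la S ->
  deskw (w \o tperm a b) (cell_swap S) = deskw w S.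
Proof.
move=> adj HS; case: cell_swapP => [p cp|none].
  by have [_ _ ->] := swap_consecutive_minima HS cp.
apply: deskw_ext => c c' x y Exy mx my /=.
have [Cc Cc' _ _] := sytk_consecutive_minima HS Exy mx my.
apply: adjacent_tperm_ltn => //; apply/eqP => -[Ec' Ec]; move: (none (x, y));
  by rewrite /consecutive_minima /= Exy eqxx -Ec -Ec' mx my ?orbT.
Qed.

End CellSwap.

Section LinearExtensions.
Variables (n : nat) (la : seq nat).
Local Notation cell := ('I_n * 'I_n)%type.

Definition lin_ext (w : cell -> nat) := forall u v, cellp la u -> cellp la v -> u != v ->
  w u != w v /\ (cell_le u v -> w u < w v).

Definition inversions (w1 w2 : cell -> nat) :=
  [set p : cell * cell | [&& cellp la p.1, cellp la p.2, w1 p.1 < w1 p.2 & w2 p.2 < w2 p.1]].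

Lemma lin_ext_tperm w a b : lin_ext w -> cellp la a -> cellp la b -> w a < w b ->
  ~~ cell_le a b -> adjacent la a b w -> lin_ext (w \o tperm a b).
Proof.
move=> L Ca Cb ab nab adj u v Cu Cv uv /=.
have Ct c : cellp la c -> cellp la (tperm a b c) by move=> Cc; case: tpermP.
have tuv : tperm a b u != tperm a b v by apply: contra_neq uv; apply: perm_inj.
split => [|le]; first by have [] := L _ _ (Ct u Cu) (Ct v Cv) tuv.
case: (eqVneq (u, v) (a, b)) => [[Eu Ev]|uvab]; first by move: nab; rewrite -Eu -Ev le.
case: (eqVneq (u, v) (b, a)) => [[Eu Ev]|uvba].
  rewrite Eu Ev in uv le; have [_ /(_ le)] := L _ _ Cb Ca uv.
  by rewrite ltnNge (ltnW ab).
by rewrite (adjacent_tperm_ltn adj) //; have [] := L _ _ Cu Cv uv; auto.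
Qed.

Lemma inversions_tperm w1 w2 a b : (a, b) \in inversions w1 w2 -> adjacent la a b w1 ->
  inversions (w1 \o tperm a b) w2 \proper inversions w1 w2.
Proof.
rewrite inE /= => /and4P[Ca Cb ab ba] adj; apply/properP; split; last first.
  exists (a, b); first by rewrite inE /= Ca Cb ab ba.
  by rewrite inE /= tpermL tpermR ltnNge (ltnW ab) /= !andbF.
apply/subsetP => -[u v] /[!inE] /= /and4P[Cu Cv uv vu]; rewrite Cu Cv vu andbT /=.
case: (eqVneq (u, v) (a, b)) => [[-> ->] //|uvab].
case: (eqVneq (u, v) (b, a)) => [[Eu Ev]|uvba].
  by rewrite Eu Ev in vu; have := ltn_trans vu ba; rewrite ltnn.
by rewrite -(adjacent_tperm_ltn adj).
Qed.

Variables (w1 w2 : cell -> nat).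
Hypotheses (L1 : lin_ext w1) (L2 : lin_ext w2).

Lemma inversion_incomparable a b : (a, b) \in inversions w1 w2 -> ~~ cell_le a b /\ ~~ cell_le b a.
Proof.
rewrite inE /= => /and4P[Ca Cb ab ba].
have anb : a != b by apply: contraTneq ab => ->; rewrite ltnn.
have bna : b != a by rewrite eq_sym.
split; apply/negP => le.
- by have [_ /(_ le)] := L2 Ca Cb anb; rewrite ltnNge (ltnW ba).
- by have [_ /(_ le)] := L1 Cb Ca bna; rewrite ltnNge (ltnW ab).
Qed.

Lemma adjacent_inversion : inversions w1 w2 != set0 ->
  exists a b, (a, b) \in inversions w1 w2 /\ adjacent la a b w1.
Proof.
case/set0Pn => p0 Hp0.
have [[a b] Hab min_ab] := arg_minnP (fun p : cell * cell => w1 p.2 - w1 p.1) Hp0.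
have {}Hab : (a, b) \in inversions w1 w2 := Hab.
exists a, b; split => // d Cd da db.
move: Hab; rewrite inE /= => /and4P[Ca Cb ab ba].
have [/eqP d_a _] := L1 Cd Ca da; have [/eqP d_b _] := L1 Cd Cb db.
suff : ~~ (w1 a < w1 d < w1 b) by lia.
apply/negP => /andP[ad d_b'].
case: (ltnP (w2 d) (w2 a)) => H.
- have : (a, d) \in inversions w1 w2 by rewrite inE /= Ca Cd ad H.
  by move/min_ab => /=; lia.
- have : (d, b) \in inversions w1 w2 by rewrite inE /= Cd Cb d_b' (leq_trans ba H).
  by move/min_ab => /=; lia.
Qed.

End LinearExtensions.

Section DescentClasses.
Variables (n k : nat) (la : seq nat) (X : {set 'I_(n + k)}).
Local Notation cell := ('I_n * 'I_n)%type.

Definition des_class (w : cell -> nat) :=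
  [set S : filling n k | sytk la S && (deskw w S == X)].

Lemma des_class_tperm a b w : ~~ cell_le a b -> ~~ cell_le b a -> adjacent la a b w ->
  des_class (w \o tperm a b) = cell_swap a b @: des_class w.
Proof.
move=> nab nba adj.
have swap_in w' S : adjacent la a b w' -> S \in des_class w' ->
    cell_swap a b S \in des_class (w' \o tperm a b).
  move=> adj' /[!inE] /andP[HS /eqP <-].
  by rewrite (sytk_cell_swap nab nba HS) (deskw_cell_swap nab nba adj' HS) eqxx.
apply/setP => S; apply/idP/imsetP => [SD|[S' S'D ->]]; last exact: swap_in.
have HS : sytk la S by move: SD; rewrite inE => /andP[].
exists (cell_swap a b S); last by rewrite (cell_swapK nab nba HS).
have := swap_in _ _ (adjacent_tperm adj) SD; rewrite !inE.
by rewrite (deskw_ext (w2 := w)) // => * /=; rewrite !tpermK.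
Qed.

Lemma card_des_class_tperm a b w : ~~ cell_le a b -> ~~ cell_le b a -> adjacent la a b w ->
  #|des_class (w \o tperm a b)| = #|des_class w|.
Proof.
move=> nab nba adj; rewrite des_class_tperm // card_in_imset // => S1 S2.
rewrite !inE => /andP[H1 _] /andP[H2 _] E.
by rewrite -(cell_swapK nab nba H1) E (cell_swapK nab nba H2).
Qed.

Lemma des_class_inversions0 w1 w2 : lin_ext la w1 -> lin_ext la w2 ->
  inversions la w1 w2 = set0 -> des_class w1 = des_class w2.
Proof.
move=> L1 L2 inv0.
have mono u v : cellp la u -> cellp la v -> u != v -> w1 u < w1 v -> w2 u < w2 v.
  move=> Cu Cv uv lt; have [/eqP ne _] := L2 _ _ Cu Cv uv.
  have : (u, v) \notin inversions la w1 w2 by rewrite inv0 inE.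
  by rewrite inE /= Cu Cv lt /=; lia.
apply/setP => S; rewrite !inE; apply: andb_id2l => HS.
rewrite (deskw_ext_sytk (w2 := w2) HS) // => c c' Cc Cc' cc' _.
have c'c : c' != c by rewrite eq_sym.
apply/idP/idP => [|lt2]; first exact: mono.
have [/eqP ne _] := L1 _ _ Cc' Cc c'c.
by case: (ltngtP (w1 c') (w1 c)) => // h; have := mono _ _ Cc Cc' cc' h; lia.
Qed.

Lemma card_des_class_lin_ext w1 w2 : lin_ext la w1 -> lin_ext la w2 ->
  #|des_class w1| = #|des_class w2|.
Proof.
move=> L1 L2; have [m] := ubnP #|inversions la w1 w2|.
elim: m w1 L1 => // m IH w1 L1; rewrite ltnS => Hm.
have [inv0|/(adjacent_inversion L1)[a [b [ab adj]]]] := eqVneq (inversions la w1 w2) set0.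
  by rewrite (des_class_inversions0 L1 L2 inv0).
have [nab nba] := inversion_incomparable L1 L2 ab.
rewrite -(card_des_class_tperm nab nba adj); apply: IH.
- by move: ab; rewrite inE /= => /and4P[Ca Cb lt _]; apply: lin_ext_tperm.
- exact: leq_trans (proper_card (inversions_tperm ab adj)) Hm.
Qed.

End DescentClasses.

Lemma head_max (la : seq nat) q : sorted geq la -> q \in la -> q <= head 0 la.
Proof.
case: la => [|p l] //= Hs; rewrite inE => /orP[/eqP -> //|Hq].
by have /allP/(_ q Hq) := order_path_min (rev_trans leq_trans) Hs.
Qed.

Lemma count_gtn_nth (la : seq nat) i j : sorted geq la ->
  (i < count (fun p => j < p) la) = (j < nth 0 la i).
Proof.
elim: la i => [|p l IH] i Hs; first by rewrite nth_nil.
have Hl : sorted geq l := path_sorted Hs.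
have le_p q : q \in l -> q <= p.
  by move=> Hq; apply: (head_max Hs); rewrite inE Hq orbT.
rewrite /=; case: (ltnP j p) => [jp|pj]; first by case: i => [|i] //=; rewrite add1n ltnS IH.
rewrite (eq_in_count (a2 := pred0)) ?count_pred0; last first.
  by move=> q /le_p qp /=; rewrite ltnNge (leq_trans qp).
case: i => [|i] /=; first by rewrite [RHS]ltnNge pj.
case: (ltnP i (size l)) => [il|li]; last by rewrite nth_default.
by rewrite [RHS]ltnNge (leq_trans (le_p _ (mem_nth 0 il)) pj).
Qed.

Lemma nth_conj_part (la : seq nat) j : sorted geq la ->
  nth 0 (conj_part la) j = count (fun p => j < p) la.
Proof.
move=> Hs; rewrite /conj_part; case: (ltnP j (head 0 la)) => jh; first by rewrite nth_mkseq.
rewrite nth_default ?size_mkseq // (eq_in_count (a2 := pred0)) ?count_pred0 //.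
by move=> q /(head_max Hs) qh /=; rewrite ltnNge (leq_trans qh).
Qed.

Lemma cellp_conj_part n (la : seq nat) (i j : 'I_n) : sorted geq la ->
  cellp (conj_part la) (j, i) = cellp la (i, j).
Proof. by move=> Hs; rewrite /cellp /= nth_conj_part // count_gtn_nth. Qed.

Section Transpose.
Variables (n k : nat).
Local Notation cell := ('I_n * 'I_n)%type.

Lemma forall_transpose (F G : cell -> bool) :
  (forall i j, F (j, i) = G (i, j)) -> [forall u, F u] = [forall u, G u].
Proof.
move=> FG; apply/forallP/forallP => H [i j]; first by rewrite -FG.
by have := H (j, i); rewrite FG.
Qed.

Lemma exists_transpose (F G : cell -> bool) :
  (forall i j, F (j, i) = G (i, j)) -> [exists u, F u] = [exists u, G u].
Proof.
move=> FG; apply/existsP/existsP => -[[i j] H]; exists (j, i); first by rewrite -FG.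
by rewrite FG.
Qed.

Definition transpose_filling (S : filling n k) : filling n k := [ffun u => S (u.2, u.1)].

Lemma transpose_fillingK : involutive transpose_filling.
Proof. by move=> S; apply/ffunP => -[i j]; rewrite !ffunE. Qed.

Lemma sytk_transpose la S : sorted geq la ->
  sytk (conj_part la) (transpose_filling S) = sytk la S.
Proof.
move=> Hs; congr [&& _, _, _, _ & _].
- by apply: forall_transpose => i j; rewrite ffunE /= cellp_conj_part.
- by apply: forall_transpose => i j; rewrite ffunE /= cellp_conj_part.
- apply: forall_transpose => i j; apply: forall_transpose => i' j'.
  by rewrite !ffunE /= !xpair_eqE andbC.
- by apply: eq_forallb => x; apply: exists_transpose => i j; rewrite ffunE.
- apply: forall_transpose => i j; apply: forall_transpose => i' j'.
  rewrite !ffunE /= !cellp_conj_part // !xpair_eqE; congr (_ ==> _).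
  by rewrite (andbC (j == j')) (andbC (j <= j')).
Qed.

Lemma desk_transpose S : desk (transpose_filling S) = deskw (fun c => c.2) S.
Proof.
apply/setP => x; rewrite !inE; congr orb.
- by apply: exists_transpose => i j; rewrite /is_min ffunE.
- apply: exists_transpose => i j; apply: exists_transpose => i' j'.
  by apply: eq_existsb => y; rewrite /is_min !ffunE.
Qed.

End Transpose.

Lemma ltn_mulD_lex m a b c d : b < m -> d < m ->
  (a * m + b < c * m + d) = (a < c) || (a == c) && (b < d).
Proof.
move=> bm dm; case: (ltngtP a c) => [ac|ca|->] /=; last by rewrite ltn_add2l.
- by have := leq_mul ac (leqnn m); rewrite mulSn; lia.
- by have := leq_mul ca (leqnn m); rewrite mulSn; lia.
Qed.

Section ReadingOrders.
Variables (n : nat) (la : seq nat).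
Local Notation cell := ('I_n * 'I_n)%type.

Definition row_reading (c : cell) := c.1 * n + c.2.
Definition col_reading (c : cell) := c.2 * n + c.1.

Lemma lin_ext_row_reading : lin_ext la row_reading.
Proof.
move=> [u1 u2] [v1 v2] _ _; rewrite /row_reading /cell_le xpair_eqE -!(inj_eq val_inj) /=.
by rewrite neq_ltn !ltn_mulD_lex //; split; lia.
Qed.

Lemma lin_ext_col_reading : lin_ext la col_reading.
Proof.
move=> [u1 u2] [v1 v2] _ _; rewrite /col_reading /cell_le xpair_eqE -!(inj_eq val_inj) /=.
by rewrite neq_ltn !ltn_mulD_lex //; split; lia.
Qed.

Lemma deskw_row_reading k (S : filling n k) : sytk la S ->
  deskw (fun c => c.1) S = deskw row_reading S.
Proof.
move=> HS; apply: (deskw_ext_sytk HS) => -[c1 c2] [d1 d2] _ _.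
by rewrite /row_reading /cell_le xpair_eqE -!(inj_eq val_inj) /= ltn_mulD_lex //; lia.
Qed.

Lemma deskw_col_reading k (S : filling n k) : sytk la S ->
  deskw (fun c => c.2) S = deskw col_reading S.
Proof.
move=> HS; apply: (deskw_ext_sytk HS) => -[c1 c2] [d1 d2] _ _.
by rewrite /col_reading /cell_le xpair_eqE -!(inj_eq val_inj) /= ltn_mulD_lex //; lia.
Qed.

End ReadingOrders.

Theorem theorem29 (n k : nat) (la : seq nat) (X : {set 'I_(n + k)}) :
  is_partition la n ->
  #|[set S : filling n k | sytk la S && (desk S == X)]| =
  #|[set S : filling n k | sytk (conj_part la) S && (desk S == X)]|.
Proof.
case/and3P => sorted_la _ _.
have -> : [set S : filling n k | sytk la S && (desk S == X)] = des_class la X (@row_reading n).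
  by apply/setP => S; rewrite !inE; apply: andb_id2l => /deskw_row_reading <-.
have -> : [set S : filling n k | sytk (conj_part la) S && (desk S == X)] =
    @transpose_filling n k @^-1: des_class la X (@col_reading n).
  apply/setP => S; rewrite !inE -[S in desk S]transpose_fillingK desk_transpose.
  rewrite -[S in sytk _ S]transpose_fillingK sytk_transpose //.
  by apply: andb_id2l => /deskw_col_reading ->.
rewrite card_preimset; last exact: can_inj (@transpose_fillingK n k).
by apply: card_des_class_lin_ext; [apply: lin_ext_row_reading | apply: lin_ext_col_reading].
Qed.
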